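(* The monoid $\mathcal{BR}(\mathfrak{S}_n)$ is presented by generators $e_1,\ldots,e_{n-1}$ and $z_1,\ldots,z_{n-1}$ subject to the relations: $e_i^2=e_i$ and $e_ie_j=e_je_i$ for all $i,j$; $z_iz_jz_i=z_jz_iz_j$ for $|i-j|=1$; $z_iz_j=z_jz_i$ for $|i-j|>1$; $e_iz_j=z_je_i$ for all $i,j$; $z_i^2=e_i$; $e_iz_i=z_i$.
   Context: $\mathfrak{C}_n$ is the partition monoid: set partitions of $[2n]$ (top points $1,\dots,n$, bottom points $n+1,\dots,2n$) with concatenation product $I*J$ (identify bottom point $n+i$ of $I$ with top point $i$ of $J$, join blocks transitively, delete the middle points). $I\preceq J$ means each block of $J$ is a union of blocks of $I$. $\mathfrak{S}_n\subseteq\mathfrak{C}_n$ consists of the partitions with all blocks of the form $\{i,n+j\}$; $s_i$ is the simple transposition; $1=\{\{i,n+i\}\}$. A set partition $J$ of $[2n]$ is boxed if $1\preceq J$ and the restriction of $J$ to $[n]$ is linear (all blocks intervals). $\mathcal{BR}(\mathfrak{S}_n)$ is the set of pairs $(I,J)$ with $I\in\mathfrak{S}_n$, $J$ boxed, $I\preceq J$, with product $(I,J)(H,K)=(I*H,J*K)$. Let $b_i$ be obtained from $1$ by merging the blocks $\{i,n+i\}$ and $\{i+1,n+i+1\}$; $e_i=(1,b_i)$ and $z_i=(s_i,b_i)$. *)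

From mathcomp Require Import all_boot.
Set Implicit Arguments. Unset Strict Implicit. Unset Printing Implicit Defensive.

(* Points of [2n], 0-based: top points 0..n-1 (paper: 1..n),
   bottom points n..2n-1 (paper: n+1..2n).
   A set partition of [2n] is encoded by its equivalence relation
   ("x and y lie in the same block"), stored as a finite function so that
   equality of partitions is Leibniz equality. *)
Definition spart (n : nat) := {ffun 'I_(n + n) * 'I_(n + n) -> bool}.

Definition is_setpart n (P : spart n) : bool :=
  [&& [forall x, P (x, x)],
      [forall x, forall y, P (x, y) ==> P (y, x)] &
      [forall x, forall y, forall z, P (x, y) ==> P (y, z) ==> P (x, z)]].

Definition rel_nat n (P : spart n) (a b : nat) : bool :=
  match (insub a : option 'I_(n + n)), (insub b : option 'I_(n + n)) with
  | Some x, Some y => P (x, y)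
  | _, _ => false
  end.

(* Concatenation I * J: points of I are 0..2n-1, points of J are shifted by n
   (so bottom point n+i of I is identified with top point i of J, both being
   n+i); blocks are joined transitively (connect), and the middle points
   n..2n-1 are deleted: top point i of the result is i, bottom point n+i of
   the result is 2n+i. *)
Definition cat_edge n (I J : spart n) : rel 'I_(n + n + n) :=
  fun a b => rel_nat I a b || [&& n <= a, n <= b & rel_nat J (a - n) (b - n)].

Definition out_pt n (x : nat) : nat := if x < n then x else x + n.

Definition pmul n (I J : spart n) : spart n :=
  [ffun p => [exists a : 'I_(n + n + n), exists b : 'I_(n + n + n),
      [&& val a == out_pt n (val p.1), val b == out_pt n (val p.2)
        & connect (cat_edge I J) a b]]].

Definition preceq n (I J : spart n) : bool := [forall p, I p ==> J p].

Definition pone n : spart n :=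
  [ffun p => (val p.1 %% n == val p.2 %% n)].

(* membership in S_n: every block is of the form {i, n+j} with i, j in [n],
   i.e. each block contains exactly one top and exactly one bottom point *)
Definition is_permpart n (I : spart n) : bool :=
  [forall x, (#|[set y | I (x, y) && (val y < n)]| == 1)
          && (#|[set y | I (x, y) && (n <= val y)]| == 1)].

(* boxed: 1 ≼ J and restriction of J to the top points is linear
   (all blocks of the restriction are intervals) *)
Definition boxed n (J : spart n) : bool :=
  preceq (pone n) J &&
  [forall x, forall y, forall z,
     [&& val x < val z, val z < val y, val y < n & J (x, y)] ==> J (x, z)].

Definition BR n := (spart n * spart n)%type.

Definition in_BR n (x : BR n) : bool :=
  [&& is_setpart x.1, is_setpart x.2, is_permpart x.1, boxed x.2
    & preceq x.1 x.2].

Definition brmul n (x y : BR n) : BR n := (pmul x.1 y.1, pmul x.2 y.2).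
Definition brone n : BR n := (pone n, pone n).

(* generators, indexed 0-based by i : 'I_(n-1) (paper index i+1) *)
(* s_i : transposition swapping top points i, i+1 (blocks {i,n+i+1},
   {i+1,n+i}, and {k,n+k} otherwise) *)
Definition swp (i k : nat) : nat := if k == i then i.+1 else if k == i.+1 then i else k.
Definition ps n (i : nat) : spart n :=
  [ffun p => let x := val p.1 in let y := val p.2 in
     if (x < n) == (y < n) then x == y
     else if x < n then y - n == swp i x else x - n == swp i y].

(* b_i : 1 with blocks {i,n+i} and {i+1,n+i+1} merged *)
Definition pb n (i : nat) : spart n :=
  [ffun p => (val p.1 %% n == val p.2 %% n)
     || ((val p.1 %% n \in [:: i; i.+1]) && (val p.2 %% n \in [:: i; i.+1]))].

Inductive gen (n : nat) : Type :=
| ge of 'I_n.-1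
| gz of 'I_n.-1.

Definition gen_el n (g : gen n) : BR n :=
  match g with
  | ge i => (pone n, pb n i)
  | gz i => (ps n i, pb n i)
  end.

Fixpoint eval n (w : seq (gen n)) : BR n :=
  match w with
  | [::] => brone n
  | g :: w' => brmul (gen_el g) (eval w')
  end.

Inductive brrel (n : nat) : seq (gen n) -> seq (gen n) -> Prop :=
| r_ee (i : 'I_n.-1) : brrel [:: ge i; ge i] [:: ge i]
| r_ecomm (i j : 'I_n.-1) : brrel [:: ge i; ge j] [:: ge j; ge i]
| r_braid (i j : 'I_n.-1) : (val i).+1 = val j \/ (val j).+1 = val i ->
    brrel [:: gz i; gz j; gz i] [:: gz j; gz i; gz j]
| r_zcomm (i j : 'I_n.-1) : (val i).+1 < val j \/ (val j).+1 < val i ->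
    brrel [:: gz i; gz j] [:: gz j; gz i]
| r_ez (i j : 'I_n.-1) : brrel [:: ge i; gz j] [:: gz j; ge i]
| r_zz (i : 'I_n.-1) : brrel [:: gz i; gz i] [:: ge i]
| r_ezi (i : 'I_n.-1) : brrel [:: ge i; gz i] [:: gz i].

Inductive brcong (n : nat) : seq (gen n) -> seq (gen n) -> Prop :=
| c_base u v : brrel u v -> brcong u v
| c_refl u : brcong u u
| c_sym u v : brcong u v -> brcong v u
| c_trans u v w : brcong u v -> brcong v w -> brcong u w
| c_ctx a b u v : brcong u v -> brcong (a ++ u ++ b) (a ++ v ++ b).

From mathcomp Require Import all_boot zify.
Set Implicit Arguments. Unset Strict Implicit. Unset Printing Implicit Defensive.

(* A word evaluates to the pair (s, B) where s is the product of its z-letters, read as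
   adjacent transpositions, and B is the box partition joining k and k.+1 exactly for the
   indices k of its letters.  Conversely, in an element (s, B) of BR(S_n) the permutation s
   moves every point inside its block of B, so bubble-sorting writes s as a product of
   transpositions from B: evaluation is onto.  The e-letters commute with everything, are
   idempotent and absorb the z-letters of the same index, so every word is congruent to e_S z_u
   with S its set of indices.  Equal values force equal S and equal permutations, and z-words
   over S with the same permutation are related by the Coxeter relations of the Young subgroup
   S_S (proved by the coset decomposition along descending words); the relation z_i^2 = 1 holds
   behind e_S because z_i^2 = e_i is absorbed there. *)

Lemma map_val_pmap_insub (T : Type) (P : pred T) (sT : subType P) (u : seq T) :
  all P u -> map val (pmap insub u : seq sT) = u.
Proof.
by move=> Pu; rewrite (pmap_filter (insubK _)) (eq_filter (isSome_insub _)); apply/all_filterP.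
Qed.

(** * Words in adjacent transpositions *)

Definition act (u : seq nat) (x : nat) : nat := foldl (fun y i => swp i y) x u.

Lemma swpP i x : (x = i /\ swp i x = i.+1) \/ (x = i.+1 /\ swp i x = i) \/
                  (x <> i /\ x <> i.+1 /\ swp i x = x).
Proof. by rewrite /swp; case: eqP => [->|?]; [left|case: eqP => [->|?]; right; [left|right]]. Qed.

Lemma swpK i : involutive (swp i).
Proof. by move=> x; have := swpP i x; have := swpP i (swp i x); lia. Qed.

Lemma swp_braid i x : swp i (swp i.+1 (swp i x)) = swp i.+1 (swp i (swp i.+1 x)).
Proof.
have := swpP i x; have := swpP i.+1 (swp i x); have := swpP i (swp i.+1 (swp i x)).
have := swpP i.+1 x; have := swpP i (swp i.+1 x); have := swpP i.+1 (swp i (swp i.+1 x)).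
lia.
Qed.

Lemma swp_comm i j x : i.+1 < j -> swp i (swp j x) = swp j (swp i x).
Proof.
by have := swpP j x; have := swpP i (swp j x); have := swpP i x; have := swpP j (swp i x); lia.
Qed.

Lemma act_cat u v x : act (u ++ v) x = act v (act u x).
Proof. exact: foldl_cat. Qed.

Lemma act_rcons u i x : act (rcons u i) x = swp i (act u x).
Proof. by rewrite -cats1 act_cat. Qed.

Lemma act_revK u : cancel (act u) (act (rev u)).
Proof. by elim: u => //= i u IH x; rewrite rev_cons act_rcons IH swpK. Qed.

Lemma act_Krev u : cancel (act (rev u)) (act u).
Proof. by rewrite -{2}(revK u); apply: act_revK. Qed.

Lemma act_fix u x : all (fun i => i.+1 < x) u -> act u x = x.
Proof.
elim: u => //= i u IH /andP [lt_ix /IH]; rewrite /act /=.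
by have := swpP i x => -[[]|[[]|[_ [_ ->]]]] //; lia.
Qed.

Lemma act_lt u N x : all (fun i => i.+1 < N) u -> x < N -> act u x < N.
Proof.
elim: u x => //= i u IH x /andP [lt_iN all_u] lt_xN.
by apply: IH => //; have := swpP i x; lia.
Qed.

Lemma all_map_iota (P : pred nat) (F : nat -> nat) a b :
  (forall k, a <= k < a + b -> P (F k)) -> all P (map F (iota a b)).
Proof. by move=> PF; apply/allP => x /mapP [k]; rewrite mem_iota => /PF ? ->. Qed.

(** * The Coxeter presentation of Young subgroups *)

Inductive coxeq (A : pred nat) : seq nat -> seq nat -> Prop :=
| coxeq_refl u : coxeq A u u
| coxeq_sym u v : coxeq A u v -> coxeq A v u
| coxeq_trans u v w : coxeq A u v -> coxeq A v w -> coxeq A u w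
| coxeq_ctx a b u v : coxeq A u v -> coxeq A (a ++ u ++ b) (a ++ v ++ b)
| coxeq_sq i : A i -> coxeq A [:: i; i] [::]
| coxeq_braid i : A i -> A i.+1 -> coxeq A [:: i; i.+1; i] [:: i.+1; i; i.+1]
| coxeq_far i j : A i -> A j -> i.+1 < j -> coxeq A [:: i; j] [:: j; i].

Section Coxeter.
Variable A : pred nat.
Notation "u ~ v" := (coxeq A u v) (at level 70).

Lemma coxeq_act u v : u ~ v -> act u =1 act v.
Proof.
elim=> //=.
- by move=> ? ? _ IH x; rewrite IH.
- by move=> ? ? ? _ IH1 _ IH2 x; rewrite IH1 IH2.
- by move=> a b ? ? _ IH x; rewrite !act_cat IH.
- by move=> i _ x; rewrite /act /= swpK.
- by move=> i _ _ x; rewrite /act /= swp_braid.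
- by move=> i j _ _ lt_ij x; rewrite /act /= (swp_comm _ lt_ij).
Qed.

Lemma coxeq_catl a u v : u ~ v -> a ++ u ~ a ++ v.
Proof. by move/(coxeq_ctx a [::]); rewrite !cats0. Qed.

Lemma coxeq_catr b u v : u ~ v -> u ++ b ~ v ++ b.
Proof. exact: coxeq_ctx [::] b u v. Qed.

Lemma coxeq_commute i s : A i ->
  all (fun k => A k && ((i.+1 < k) || (k.+1 < i))) s -> s ++ [:: i] ~ i :: s.
Proof.
move=> Ai; elim: s => [|k s IH] /=; first by move=> _; apply: coxeq_refl.
case/andP=> /andP [Ak far_ik] /IH {}IH.
apply: coxeq_trans (coxeq_catl [:: k] IH) _.
apply: (coxeq_catr s (u := [:: k; i]) (v := [:: i; k])).
by case/orP: far_ik => ?; [apply: coxeq_sym|]; apply: coxeq_far.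
Qed.

Definition desc m d := [seq m - k | k <- iota 0 d].

Lemma descD m a b : desc m (a + b) = desc m a ++ [seq m - k | k <- iota a b].
Proof. by rewrite /desc iotaD map_cat. Qed.

Lemma descS m d : desc m d.+1 = rcons (desc m d) (m - d).
Proof. by rewrite -addn1 descD cats1. Qed.

Lemma act_desc m d : d <= m.+1 -> act (desc m d) m.+1 = m.+1 - d.
Proof.
elim: d => [|d IH] le_dm; first by rewrite subn0.
by rewrite descS act_rcons IH; [have := swpP (m - d) (m.+1 - d)|]; lia.
Qed.

Lemma act_desc_le m k : k <= m -> act (desc m.-1 (m - k)) m = k.
Proof.
case: m => [|m] le_km; first by rewrite (_ : k = 0) //; lia.
by rewrite act_desc /=; lia.
Qed.

Section Descending.
Variables (m d : nat).
Hypotheses (le_dm : d <= m.+1) (A_desc : forall k, m.+1 - d <= k <= m -> A k).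

Lemma coxeq_desc_commute i : A i -> i.+1 < m.+1 - d -> desc m d ++ [:: i] ~ i :: desc m d.
Proof.
move=> Ai lt_i; apply: coxeq_commute => //.
by apply: all_map_iota => k lt_k; rewrite A_desc /=; lia.
Qed.

Lemma coxeq_desc_shift i : m.+1 - d < i <= m -> desc m d ++ [:: i] ~ i.-1 :: desc m d.
Proof.
move=> lt_i; have [r def_d] : exists r, d = (m - i) + 2 + r by exists (d - (m - i + 2)); lia.
set a := m - i in def_d; set R := [seq m - k | k <- iota (a + 2) r].
have -> : desc m d = desc m a ++ [:: i; i.-1] ++ R.
  rewrite def_d descD descD -catA; congr (_ ++ (_ ++ _)).
  by rewrite /= /a; congr [:: _; _]; lia.
have Ai : A i by apply: A_desc; lia.
have Ai' : A i.-1 by apply: A_desc; lia.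
have R_i : R ++ [:: i] ~ i :: R.
  by apply: coxeq_commute => //; apply: all_map_iota => k ?; rewrite A_desc /=; lia.
have braid : [:: i; i.-1; i] ~ [:: i.-1; i; i.-1].
  have := @coxeq_braid A i.-1; rewrite prednK; last lia.
  by move=> /(_ Ai' Ai) /coxeq_sym.
have a_i : desc m a ++ [:: i.-1] ~ i.-1 :: desc m a.
  by apply: coxeq_commute => //; apply: all_map_iota => k ?; rewrite A_desc /=; lia.
rewrite -!catA; apply: coxeq_trans (coxeq_catl _ (coxeq_catl [:: i; i.-1] R_i)) _.
apply: (coxeq_trans (coxeq_ctx (desc m a) R braid)).
have -> : desc m a ++ [:: i.-1; i; i.-1] ++ R = (desc m a ++ [:: i.-1]) ++ [:: i; i.-1] ++ R.
  by rewrite -catA.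
exact: (coxeq_catr ([:: i; i.-1] ++ R) a_i).
Qed.

End Descending.

(* [desc m d], d <= m.+1, are the minimal representatives of the cosets of the Young subgroup
   on the letters below [m]. *)
Lemma coxeq_coset_decomp m u : all (fun k => A k && (k <= m)) u ->
  exists w d, [/\ u ~ w ++ desc m d, all (fun k => A k && (k < m)) w, d <= m.+1
                & forall k, m.+1 - d <= k <= m -> A k].
Proof.
elim/last_ind: u => [_|u i IH]; first by exists [::], 0; split=> //; [apply: coxeq_refl|lia].
rewrite all_rcons => /andP [/andP [Ai le_im] /IH [w [d [u_wd Aw le_dm A_desc]]]].
have u_i : rcons u i ~ w ++ desc m d ++ [:: i] by rewrite -cats1 catA; apply: coxeq_catr.
have [lt_i|gt_i|eq_i] := ltngtP i.+1 (m.+1 - d).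
- exists (rcons w i), d; split=> //; last by rewrite all_rcons Ai Aw andbT; lia.
  apply: coxeq_trans u_i _; rewrite -cats1 -catA.
  exact/coxeq_catl/coxeq_desc_commute.
- have [//|gt_i'|eq_i] := ltngtP i (m.+1 - d); first lia.
    exists (rcons w i.-1), d; split=> //; last by rewrite all_rcons Aw A_desc /=; lia.
    apply: coxeq_trans u_i _; rewrite -cats1 -catA.
    by apply/coxeq_catl/coxeq_desc_shift => //; lia.
  exists w, d.-1; split=> //; [|lia|move=> k ?; apply: A_desc; lia].
  apply: coxeq_trans u_i _; apply: coxeq_catl.
  have -> : desc m d = rcons (desc m d.-1) i.
    by rewrite -{1}(@prednK d) ?descS; [congr rcons|]; lia.
  have := coxeq_catl (desc m d.-1) (coxeq_sq Ai).
  by rewrite cats0 -cats1 -catA.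
- exists w, d.+1; split=> //; [|lia|move=> k ?; case: (k =P i) => [->//|?]; apply: A_desc; lia].
  by rewrite descS -[rcons (desc m d) _]cats1 (_ : m - d = i); last lia.
Qed.

Lemma coxeq_of_act m u v :
  all (fun k => A k && (k < m)) u -> all (fun k => A k && (k < m)) v ->
  act u =1 act v -> u ~ v.
Proof.
elim: m u v => [|m IH] u v Au Av uv.
  have nil_lt0 w : all (fun k => A k && (k < 0)) w -> w = [::].
    by case: w => //= ? ?; rewrite ltn0 andbF.
  by rewrite (nil_lt0 u Au) (nil_lt0 v Av); apply: coxeq_refl.
have [w1 [d1 [u_w1 Aw1 le_d1 _]]] := coxeq_coset_decomp Au.
have [w2 [d2 [v_w2 Aw2 le_d2 _]]] := coxeq_coset_decomp Av.
have act_wd w d : all (fun k => A k && (k < m)) w -> d <= m.+1 ->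
    act (w ++ desc m d) m.+1 = m.+1 - d.
  move=> Aw le_d; rewrite act_cat (@act_fix w) ?act_desc //.
  by apply: sub_all Aw => k /andP [_]; lia.
have eq_d : d1 = d2.
  have := uv m.+1; rewrite (coxeq_act u_w1) (coxeq_act v_w2) !act_wd //; lia.
subst d2; have w1w2 : act w1 =1 act w2.
  move=> x; rewrite -[LHS](act_revK (desc m d1)) -[RHS](act_revK (desc m d1)).
  by rewrite -(act_cat w1) -(act_cat w2) -(coxeq_act u_w1) -(coxeq_act v_w2) uv.
apply: (coxeq_trans u_w1); apply: (coxeq_trans _ (coxeq_sym v_w2)).
exact/coxeq_catr/IH.
Qed.

End Coxeter.

(** * Normal forms of words in the generators *)

Section Words.
Variable n : nat.
Notation word := (seq (gen n)).
Notation ges s := (map (@ge n) s).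

Lemma brcong_catl (a u v : word) : brcong u v -> brcong (a ++ u) (a ++ v).
Proof. by move/(c_ctx a [::]); rewrite !cats0. Qed.

Lemma brcong_catr (b u v : word) : brcong u v -> brcong (u ++ b) (v ++ b).
Proof. exact: c_ctx [::] b u v. Qed.

Lemma brcong_ge_commute i (X : word) : brcong (ge i :: X) (X ++ [:: ge i]).
Proof.
elim: X => [|g X IH]; first exact: c_refl.
apply: (c_trans (v := g :: ge i :: X)); last exact: (brcong_catl [:: g] IH).
apply: (brcong_catr X (u := [:: ge i; g]) (v := [:: g; ge i])); apply: c_base.
by case: g => j; [apply: r_ecomm | apply: r_ez].
Qed.

Lemma brcong_ges_commute s (X : word) : brcong (ges s ++ X) (X ++ ges s).
Proof.
elim: s => [|i s IH] /=; first by rewrite cats0; apply: c_refl.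
apply: c_trans (brcong_catl [:: ge i] IH) _.
by have := brcong_catr (ges s) (brcong_ge_commute i X); rewrite -catA.
Qed.

Lemma brcong_ges_absorb s i : i \in s -> brcong (ges s ++ [:: ge i]) (ges s).
Proof.
elim: s => // j s IH; rewrite inE => /predU1P [->|/IH s_i] /=; last first.
  exact: (brcong_catl [:: ge j] s_i).
apply: c_trans (brcong_catl [:: ge j] (c_sym (brcong_ge_commute j (ges s)))) _.
by apply: (brcong_catr _ (u := [:: ge j; ge j]) (v := [:: ge j])); apply/c_base/r_ee.
Qed.

Lemma brcong_ges_sub s t : {subset t <= s} -> brcong (ges s ++ ges t) (ges s).
Proof.
elim: t => [|j t IH] sub_ts /=; first by rewrite cats0; apply: c_refl.
rewrite -cat1s catA; apply: c_trans (brcong_catr _ (brcong_ges_absorb _)) _.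
  by apply: sub_ts; rewrite inE eqxx.
by apply: IH => x t_x; apply: sub_ts; rewrite inE t_x orbT.
Qed.

Lemma brcong_ges_eq_mem s t : s =i t -> brcong (ges s) (ges t).
Proof.
move=> st; apply: c_trans (c_sym (brcong_ges_sub (t := t) _)) _; first by move=> x; rewrite st.
by apply: c_trans (brcong_ges_commute _ _) _; apply: brcong_ges_sub => x; rewrite st.
Qed.

Definition gidx (g : gen n) : 'I_n.-1 := match g with ge i | gz i => i end.
Definition zidx (g : gen n) : option 'I_n.-1 := if g is gz i then Some i else None.

Lemma brcong_normal_form (w : word) :
  brcong w (ges (map gidx w) ++ map (@gz n) (pmap zidx w)).
Proof.
elim: w => [|[] i w IH] /=; first exact: c_refl; first exact: (brcong_catl [:: ge i] IH).
set E := ges _ in IH *; set Z := map _ _ in IH *.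
apply: c_trans (brcong_catl [:: gz i] IH) _.
apply: (c_trans (v := [:: ge i; gz i] ++ E ++ Z)).
  by apply: brcong_catr; apply/c_sym/c_base/r_ezi.
apply: (brcong_catl [:: ge i]); rewrite -[gz i :: Z]cat1s catA.
exact/(brcong_catr Z (u := gz i :: E))/c_sym/brcong_ges_commute.
Qed.

Definition zgens (u : seq nat) : word := map (@gz n) (pmap insub u).

Lemma zgens_cat u v : zgens (u ++ v) = zgens u ++ zgens v.
Proof. by rewrite /zgens pmap_cat map_cat. Qed.

Lemma zgens1 k (lt_k : k < n.-1) : zgens [:: k] = [:: gz (Ordinal lt_k)].
Proof. by rewrite /zgens /= insubT. Qed.

Lemma zgens_val (s : seq 'I_n.-1) : zgens (map val s) = map (@gz n) s.
Proof. by rewrite /zgens; congr map; elim: s => //= i s ->; rewrite valK. Qed.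

Lemma brcong_coxeq (A : pred nat) s u v : coxeq A u v ->
  {subset A <= gtn n.-1} -> {subset A <= map val s} ->
  brcong (ges s ++ zgens u) (ges s ++ zgens v).
Proof.
move=> uv A_lt A_s; elim: uv => {u v}.
- by move=> *; apply: c_refl.
- by move=> ? ? _; apply: c_sym.
- by move=> ? ? ? _ IH1 _; apply: c_trans.
- move=> a b u v _ IH; rewrite !zgens_cat.
  have slide x : brcong (ges s ++ zgens a ++ x ++ zgens b) (zgens a ++ (ges s ++ x) ++ zgens b).
    by rewrite !catA; apply/brcong_catr/brcong_catr/brcong_ges_commute.
  apply: c_trans (slide _) (c_trans _ (c_sym (slide _))).
  exact/brcong_catl/brcong_catr.
- move=> i /[dup] Ai /A_lt lt_i; rewrite (zgens_cat [:: i]) zgens1 cats0.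
  apply: c_trans (brcong_catl _ (c_base (r_zz (Ordinal lt_i)))) _.
  apply: brcong_ges_absorb; have /mapP [j s_j eq_ij] := A_s _ Ai.
  by rewrite (_ : Ordinal lt_i = j) //; apply: val_inj.
- move=> i Ai Ai1; have lt_i := A_lt _ Ai; have lt_i1 := A_lt _ Ai1.
  rewrite -[[:: i; i.+1; i]]/([:: i] ++ [:: i.+1] ++ [:: i]).
  rewrite -[[:: i.+1; i; i.+1]]/([:: i.+1] ++ [:: i] ++ [:: i.+1]).
  by rewrite !zgens_cat (zgens1 lt_i) (zgens1 lt_i1); apply/brcong_catl/c_base/r_braid; left.
- move=> i j Ai Aj lt_ij; have lt_i := A_lt _ Ai; have lt_j := A_lt _ Aj.
  rewrite -[[:: i; j]]/([:: i] ++ [:: j]) -[[:: j; i]]/([:: j] ++ [:: i]).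
  by rewrite !zgens_cat (zgens1 lt_i) (zgens1 lt_j); apply/brcong_catl/c_base/r_zcomm; left.
Qed.

End Words.

(** * Permutation partitions and box partitions *)

Lemma connect_invariant (T : finType) (e : rel T) (R : pred T) x y :
  R x -> (forall y z, R y -> e y z -> R z) -> connect e x y -> R y.
Proof.
move=> Rx R_e /connectP [p]; elim: p x Rx => [|z p IH] x Rx /=; first by move=> _ ->.
by case/andP=> /(R_e _ _ Rx) /IH; apply.
Qed.

Definition linked (S : seq nat) a b :=
  all (mem S) (iota (minn a b) (maxn a b - minn a b)).

Lemma linkedP S a b :
  reflect (forall k, minn a b <= k < maxn a b -> k \in S) (linked S a b).
Proof.
by apply: (iffP allP) => S_ab k; rewrite ?mem_iota => ?; apply: S_ab; rewrite ?mem_iota; lia.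
Qed.

Lemma linked_refl S a : linked S a a.
Proof. by apply/linkedP; lia. Qed.

Lemma linked_sym S a b : linked S a b = linked S b a.
Proof. by rewrite /linked minnC maxnC. Qed.

Lemma linked_trans S a b c : linked S a b -> linked S b c -> linked S a c.
Proof.
move=> /linkedP ab /linkedP bc; apply/linkedP => k ?.
by case: (leqP (minn a b) k) => ?; case: (ltnP k (maxn a b)) => ?; [apply: ab|apply: bc..]; lia.
Qed.

Lemma linked_sub S T a b : {subset S <= T} -> linked S a b -> linked T a b.
Proof. by move=> ST /linkedP ab; apply/linkedP => k /ab /ST. Qed.

Lemma linked_eq_mem S T a b : S =i T -> linked S a b = linked T a b.
Proof. by move=> ST; apply/idP/idP; apply: linked_sub => x; rewrite ST. Qed.

Lemma linkedS S k : linked S k k.+1 = (k \in S).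
Proof. by apply/linkedP/idP => [-> //|S_k j ?]; [lia | rewrite (_ : j = k) //; lia]. Qed.

Lemma linked_nil a b : linked [::] a b = (a == b).
Proof.
apply/linkedP/eqP => [ab|-> k]; last lia.
by case: (ltngtP a b) => // ?; move: (ab (minn a b)); rewrite in_nil; lia.
Qed.

Lemma linked_act S u x : all (mem S) u -> linked S x (act u x).
Proof.
elim: u x => [|i u IH] x; first by move=> _; apply: linked_refl.
case/andP=> S_i /(IH (swp i x)); apply: linked_trans.
by have := swpP i x => -[[-> ->]|[[-> ->]|[_ [_ ->]]]];
  rewrite ?linked_refl ?linkedS // linked_sym linkedS.
Qed.

Section Partitions.
Variable n : nat.
Implicit Types (P Q : spart n) (f fi g gi : nat -> nat) (S T : seq nat).

Definition perm_rel f x y : bool :=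
  if (x < n) == (y < n) then x == y else if x < n then y - n == f x else x - n == f y.

Definition permpart f : spart n := [ffun p => perm_rel f (val p.1) (val p.2)].

Definition boxpart S : spart n := [ffun p => linked S (val p.1 %% n) (val p.2 %% n)].

Definition inv_on f fi := forall x, x < n ->
  [/\ f x < n, fi x < n, fi (f x) = x & f (fi x) = x].

(* For [inv_on f fi]: the top point of the block of [permpart f] containing [c]. *)
Definition top_of fi c := if c < n then c else fi (c - n).

Lemma inv_on_id : inv_on id id.
Proof. by []. Qed.

Lemma inv_on_comp f fi g gi : inv_on f fi -> inv_on g gi -> inv_on (g \o f) (fi \o gi).
Proof.
move=> f_fi g_gi x lt_x; have [f1 f2 f3 f4] := f_fi x lt_x; have [g1 g2 g3 g4] := g_gi (f x) f1.
have [g1' g2' g3' g4'] := g_gi x lt_x; have [f1' f2' f3' f4'] := f_fi (gi x) g2'.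
by split; rewrite /= ?g3 ?f3 ?f4' ?g4'.
Qed.

Lemma inv_on_act u : all (fun i => i.+1 < n) u -> inv_on (act u) (act (rev u)).
Proof.
by move=> u_lt x lt_x; split; rewrite ?act_revK ?act_Krev //; apply: act_lt; rewrite ?all_rev.
Qed.

Lemma perm_relE f fi c d : inv_on f fi -> c < n + n -> d < n + n ->
  perm_rel f c d = (top_of fi c == top_of fi d).
Proof.
move=> f_fi lt_c lt_d; rewrite /perm_rel /top_of.
case: (ltnP c n) => c_n; case: (ltnP d n) => d_n //=.
- have [? ? ? f_d] := f_fi (d - n) ltac:(lia); have [? ? fi_c _] := f_fi c c_n.
  by apply/eqP/eqP => ->; rewrite ?fi_c ?f_d.
- have [? ? ? f_c] := f_fi (c - n) ltac:(lia); have [? ? fi_d _] := f_fi d d_n.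
  by apply/eqP/eqP => [->|<-]; rewrite ?fi_d ?f_c.
- have [? ? ? f_c] := f_fi (c - n) ltac:(lia); have [? ? ? f_d] := f_fi (d - n) ltac:(lia).
  by apply/eqP/eqP => [->//|/(congr1 f)]; rewrite f_c f_d; lia.
Qed.

Lemma rel_natE P c d (lt_c : c < n + n) (lt_d : d < n + n) :
  rel_nat P c d = P (Ordinal lt_c, Ordinal lt_d).
Proof. by rewrite /rel_nat !insubT. Qed.

Lemma rel_nat_ord P (a b : 'I_(n + n)) : rel_nat P a b = P (a, b).
Proof. by rewrite /rel_nat !valK. Qed.

Lemma rel_nat_lt P c d : rel_nat P c d -> (c < n + n) && (d < n + n).
Proof. by rewrite /rel_nat; do 2![case: insubP => // ? -> _]. Qed.

Lemma setpart_rel_nat P : is_setpart P ->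
  [/\ forall c, c < n + n -> rel_nat P c c,
      forall c d, rel_nat P c d -> rel_nat P d c &
      forall c d e, rel_nat P c d -> rel_nat P d e -> rel_nat P c e].
Proof.
case/and3P=> /forallP refl /forallP sym /forallP trans; split.
- by move=> c lt_c; rewrite rel_natE.
- move=> c d cd; have /andP [lt_c lt_d] := rel_nat_lt cd; move: cd; rewrite !rel_natE.
  by move: (sym (Ordinal lt_c)) => /forallP /(_ (Ordinal lt_d)) /implyP.
- move=> c d e cd de; have /andP [lt_c lt_d] := rel_nat_lt cd.
  have /andP [_ lt_e] := rel_nat_lt de.
  move: cd de; rewrite !rel_natE => cd de.
  move: (trans (Ordinal lt_c)) => /forallP /(_ (Ordinal lt_d)) /forallP /(_ (Ordinal lt_e)).
  by rewrite cd de.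
Qed.

Lemma setpart_symE P : is_setpart P -> symmetric (rel_nat P).
Proof. by case/setpart_rel_nat=> _ sym _ c d; apply/idP/idP => /sym. Qed.

Lemma rel_nat_permpart f c d :
  rel_nat (permpart f) c d = [&& c < n + n, d < n + n & perm_rel f c d].
Proof.
case: (ltnP c (n + n)) => lt_c; case: (ltnP d (n + n)) => lt_d /=;
  try by apply/negbTE/negP => /rel_nat_lt; lia.
by rewrite rel_natE ffunE.
Qed.

Lemma rel_nat_boxpart S c d :
  rel_nat (boxpart S) c d = [&& c < n + n, d < n + n & linked S (c %% n) (d %% n)].
Proof.
case: (ltnP c (n + n)) => lt_c; case: (ltnP d (n + n)) => lt_d /=;
  try by apply/negbTE/negP => /rel_nat_lt; lia.
by rewrite rel_natE ffunE.
Qed.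

Lemma modn_subn y : n <= y -> (y - n) %% n = y %% n.
Proof. by move=> le_ny; rewrite -{2}(subnK le_ny) modnDr. Qed.

Lemma modn_small2 x : x < n + n -> x %% n = if x < n then x else x - n.
Proof.
by move=> lt_x; case: ltnP => ?; [rewrite modn_small | rewrite -modn_subn // modn_small]; lia.
Qed.

Lemma pone_permpart : pone n = permpart id.
Proof.
apply/ffunP => -[a b]; rewrite !ffunE /perm_rel /=.
rewrite (modn_small2 (ltn_ord a)) (modn_small2 (ltn_ord b)).
have := ltn_ord a; have := ltn_ord b.
by case: (ltnP a n); case: (ltnP b n) => /= *; apply/eqP/eqP; lia.
Qed.

Lemma pone_boxpart : pone n = boxpart [::].
Proof. by apply/ffunP => -[a b]; rewrite !ffunE linked_nil. Qed.

Lemma ps_permpart i : ps n i = permpart (swp i).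
Proof. by apply/ffunP => p; rewrite !ffunE. Qed.

Lemma pb_boxpart i : pb n i = boxpart [:: i].
Proof.
apply/ffunP => p; rewrite !ffunE; set x := _ %% n; set y := _ %% n.
rewrite !inE; apply/idP/linkedP => [|xy].
  case/orP=> [/eqP-> k|/andP [/orP [] /eqP-> /orP [] /eqP->] k] ?;
    by rewrite mem_seq1; apply/eqP; lia.
case: (x =P y) => //= ne_xy.
have min_xy : minn x y = i by apply/eqP; rewrite -mem_seq1; apply: xy; lia.
have max_xy : maxn x y = i.+1.
  case: (ltnP (minn x y).+1 (maxn x y)) => ?; last lia.
  by have /(_ _)/eqP := xy (minn x y).+1; rewrite mem_seq1; lia.
have [x_i | x_i] : x = i \/ x = i.+1 by lia.
all: have [y_i | y_i] : y = i \/ y = i.+1 by lia.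
all: by rewrite x_i y_i !eqxx ?orbT.
Qed.

Lemma out_pt_lt (a : 'I_(n + n)) : out_pt n a < n + n + n.
Proof. by have := ltn_ord a; rewrite /out_pt; case: ifP; lia. Qed.

Lemma out_pt_mod (a : 'I_(n + n)) : out_pt n a %% n = a %% n.
Proof. by rewrite /out_pt; case: ifP => // _; rewrite modnDr. Qed.

Section Concatenation.
Variables I J : spart n.

Definition cat_rel c d := rel_nat I c d || [&& n <= c, n <= d & rel_nat J (c - n) (d - n)].

Definition cconnect c d :=
  if (insub c : option 'I_(n + n + n)) is Some a then
    if (insub d : option 'I_(n + n + n)) is Some b then connect (cat_edge I J) a b else false
  else false.

Lemma pmulE (a b : 'I_(n + n)) : pmul I J (a, b) = cconnect (out_pt n a) (out_pt n b).
Proof.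
rewrite ffunE /cconnect !insubT ?out_pt_lt // => lt_b lt_a /=.
apply/existsP/idP => [[x /existsP [y]]|xy].
  by case/and3P=> /eqP ex /eqP ey; congr (connect _ _ _); apply: val_inj.
by exists (Ordinal lt_a); apply/existsP; exists (Ordinal lt_b); rewrite /= !eqxx.
Qed.

Lemma cconnect_refl c : c < n + n + n -> cconnect c c.
Proof. by move=> lt_c; rewrite /cconnect insubT connect0. Qed.

Lemma cconnect_trans c d x : cconnect c d -> cconnect d x -> cconnect c x.
Proof.
rewrite /cconnect; case: insubP => // a _ _; case: insubP => // b _ _ ab.
by case: insubP => // ? _ _; apply: connect_trans.
Qed.

Lemma cconnect_edge c d : c < n + n + n -> d < n + n + n -> cat_rel c d -> cconnect c d.
Proof. by move=> lt_c lt_d cd; rewrite /cconnect !insubT; apply: connect1. Qed.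

Lemma cconnect_top c d : rel_nat I c d -> cconnect c d.
Proof.
move=> cd; have /andP [? ?] := rel_nat_lt cd.
by apply: cconnect_edge; rewrite /cat_rel ?cd //; lia.
Qed.

Lemma cconnect_bot c d : rel_nat J c d -> cconnect (n + c) (n + d).
Proof.
move=> cd; have /andP [? ?] := rel_nat_lt cd.
apply: cconnect_edge; try lia.
by rewrite /cat_rel !addKn cd !leq_addr orbT.
Qed.

Lemma cconnect_sym : is_setpart I -> is_setpart J -> forall c d, cconnect c d -> cconnect d c.
Proof.
move=> spI spJ c d; rewrite /cconnect; case: insubP => // a _ _; case: insubP => // b _ _.
have sym_e : symmetric (cat_edge I J).
  by move=> x y; rewrite /cat_edge (setpart_symE spI) (setpart_symE spJ) andbCA.
by rewrite (sym_connect_sym sym_e).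
Qed.

Lemma cconnect_invariant (R : pred nat) c d : R c ->
  (forall y z, y < n + n + n -> z < n + n + n -> R y -> cat_rel y z -> R z) ->
  cconnect c d -> R d.
Proof.
move=> Rc R_e; rewrite /cconnect; case: insubP => // a _ ac; case: insubP => // b _ <-.
apply: (connect_invariant (R := fun x : 'I_(n + n + n) => R x)); rewrite ?ac //.
by move=> y z; apply: R_e.
Qed.

End Concatenation.

Lemma is_setpart_label P (F : 'I_(n + n) -> nat) :
  (forall a b, P (a, b) = (F a == F b)) -> is_setpart P.
Proof.
move=> PF; apply/and3P; split; apply/forallP => x; rewrite ?PF //.
  by apply/forallP => y; rewrite !PF; apply/implyP => /eqP->.
by do 2!apply/forallP => ?; rewrite !PF; apply/implyP => /eqP->; apply/implyP.
Qed.

Lemma is_setpart_permpart f fi : inv_on f fi -> is_setpart (permpart f).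
Proof.
move=> f_fi; apply: (@is_setpart_label _ (fun a => top_of fi a)) => a b.
by rewrite ffunE (perm_relE f_fi (ltn_ord a) (ltn_ord b)).
Qed.

Lemma is_setpart_boxpart S : is_setpart (boxpart S).
Proof.
apply/and3P; split; apply/forallP => x; rewrite ?ffunE ?linked_refl //.
  by apply/forallP => y; rewrite !ffunE linked_sym implybb.
by do 2!apply/forallP => ?; rewrite !ffunE; apply/implyP => ab; apply/implyP; apply: linked_trans.
Qed.

Section PermProduct.
Variables (f fi g gi : nat -> nat).
Hypotheses (f_fi : inv_on f fi) (g_gi : inv_on g gi).

(* [top_of] on the 3n points of the concatenation; it is constant along its edges. *)
Let top_cat c := if c < n then c else fi (top_of gi (c - n)).

Lemma top_cat_lt y : y < n + n -> top_cat y = top_of fi y.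
Proof. by move=> lt_y; rewrite /top_cat /top_of; case: ifP => // _; rewrite ifT //; lia. Qed.

Lemma top_cat_edge y z : y < n + n + n -> z < n + n + n ->
  cat_rel (permpart f) (permpart g) y z -> top_cat y = top_cat z.
Proof.
move=> lt_y lt_z; rewrite /cat_rel !rel_nat_permpart.
case/orP=> [/and3P [? ? yz] | /and3P [? ? /and3P [? ? yz]]].
  by rewrite (perm_relE f_fi) // in yz; rewrite !top_cat_lt // (eqP yz).
by rewrite (perm_relE g_gi) // in yz; rewrite /top_cat (eqP yz) !ifF //; apply/negbTE; lia.
Qed.

Lemma top_cat_out (a : 'I_(n + n)) : top_cat (out_pt n a) = top_of (fi \o gi) a.
Proof.
rewrite /top_cat /top_of /out_pt; case: (ltnP a n) => lt_a; rewrite ?lt_a //.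
by rewrite !ifF ?addnK //; lia.
Qed.

Lemma cconnect_top_of (a : 'I_(n + n)) :
  cconnect (permpart f) (permpart g) (top_of (fi \o gi) a) (out_pt n a).
Proof.
rewrite /top_of /out_pt /comp; case: ltnP => le_a; first by apply: cconnect_refl; lia.
have lt_a := ltn_ord a; have [_ gi_a _ g_gi_a] := @g_gi (a - n) ltac:(lia).
have [_ fi_a _ f_fi_a] := f_fi gi_a.
set x := fi (gi (a - n)) in fi_a f_fi_a *; apply: (@cconnect_trans _ _ _ (n + f x)).
  by apply: cconnect_top; rewrite rel_nat_permpart /perm_rel ifF ?ifT ?addKn ?eqxx //; lia.
rewrite f_fi_a (_ : a + n = n + a); last lia.
by apply: cconnect_bot; rewrite rel_nat_permpart /perm_rel ifF ?ifT ?g_gi_a ?eqxx //; lia.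
Qed.

Lemma pmul_permpart : pmul (permpart f) (permpart g) = permpart (g \o f).
Proof.
apply/ffunP => -[a b]; rewrite pmulE ffunE /= (perm_relE (inv_on_comp f_fi g_gi)) //.
rewrite -!top_cat_out; apply/idP/eqP => [ab|eq_ab].
  apply/esym/eqP.
  apply: (cconnect_invariant (R := fun z => top_cat z == top_cat (out_pt n a))) ab => //.
  by move=> y z lt_y lt_z /eqP <- /(top_cat_edge lt_y lt_z) ->.
have sym := cconnect_sym (is_setpart_permpart f_fi) (is_setpart_permpart g_gi).
apply: cconnect_trans (sym _ _ (cconnect_top_of a)) _.
by rewrite -!top_cat_out eq_ab top_cat_out; apply: cconnect_top_of.
Qed.

End PermProduct.

Section BoxProduct.
Variables S T : seq nat.
Let C := cconnect (boxpart S) (boxpart T).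
Let C_sym := cconnect_sym (is_setpart_boxpart S) (is_setpart_boxpart T).

Lemma linked_cat_edge y z :
  cat_rel (boxpart S) (boxpart T) y z -> linked (S ++ T) (y %% n) (z %% n).
Proof.
rewrite /cat_rel !rel_nat_boxpart => /orP [/and3P [_ _ yz] | /and3P [le_y le_z /and3P [_ _]]].
  by apply: linked_sub yz => x; rewrite mem_cat => ->.
by rewrite !modn_subn //; apply: linked_sub => x; rewrite mem_cat orbC => ->.
Qed.

Lemma cconnect_mod c : c < n + n + n -> C (c %% n) c.
Proof.
have C_mod2 x : x < n + n -> C (x %% n) x.
  move=> lt_x; have lt_mod : x %% n < n by rewrite ltn_pmod //; lia.
  by apply: cconnect_top; rewrite rel_nat_boxpart modn_mod linked_refl; lia.
move=> lt_c; case: (ltnP c (n + n)) => [|le_c]; first exact: C_mod2.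
apply: (@cconnect_trans _ _ _ (c - n)); first by rewrite -modn_subn; [apply: C_mod2|]; lia.
have := @cconnect_bot (boxpart S) (boxpart T) (c - n - n) (c - n).
rewrite !subnKC; try lia.
by apply; rewrite rel_nat_boxpart modn_subn ?linked_refl; lia.
Qed.

Lemma cconnect_succ k : k \in S ++ T -> k.+1 < n -> C k k.+1.
Proof.
rewrite mem_cat => /orP [S_k | T_k] lt_k.
  by apply: cconnect_top; rewrite rel_nat_boxpart !modn_small ?linkedS ?S_k //; lia.
have C_top x : x < n -> C x (n + x).
  by move=> lt_x; have := @cconnect_mod (n + x); rewrite modnDl modn_small //; apply; lia.
apply: cconnect_trans (C_top _ _) _; first lia.
apply: cconnect_trans (C_sym (C_top _ lt_k)).
by apply: cconnect_bot; rewrite rel_nat_boxpart !modn_small ?linkedS ?T_k //; lia.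
Qed.

Lemma cconnect_linked p q : linked (S ++ T) p q -> p <= q -> q < n -> C p q.
Proof.
elim: q => [|q IH] pq le_pq lt_q; first by rewrite (_ : p = 0); [apply: cconnect_refl|]; lia.
case: (ltnP p q.+1) => lt_p; last by rewrite (_ : p = q.+1); [apply: cconnect_refl|]; lia.
move/linkedP: pq => pq; apply: (@cconnect_trans _ _ _ q).
  by apply: IH; [apply/linkedP => k ?; apply: pq|..]; lia.
by apply: cconnect_succ; [apply: pq|]; lia.
Qed.

Lemma pmul_boxpart : pmul (boxpart S) (boxpart T) = boxpart (S ++ T).
Proof.
apply/ffunP => -[a b]; rewrite pmulE ffunE /=.
apply/idP/idP => [ab|].
  rewrite -(out_pt_mod a) -(out_pt_mod b).
  apply: (cconnect_invariant (R := fun z => linked (S ++ T) (out_pt n a %% n) (z %% n))) ab.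
    exact: linked_refl.
  by move=> y z _ _ ay /linked_cat_edge; apply: linked_trans.
have lt_n : 0 < n by have := ltn_ord a; lia.
move=> ab; apply: cconnect_trans (C_sym (cconnect_mod (out_pt_lt a))) _.
apply: cconnect_trans (cconnect_mod (out_pt_lt b)); rewrite !out_pt_mod.
have := ltn_pmod a lt_n; have := ltn_pmod b lt_n.
case: (leqP (a %% n) (b %% n)) => ab_mod *; first exact: cconnect_linked.
by apply/C_sym/cconnect_linked; rewrite 1?linked_sym //; lia.
Qed.

End BoxProduct.

Lemma is_permpart_permpart f fi : inv_on f fi -> is_permpart (permpart f).
Proof.
move=> f_fi; have top_lt (a : 'I_(n + n)) : top_of fi a < n.
  have := ltn_ord a; rewrite /top_of; case: (ltnP a n) => // ? ?.
  by have [] := f_fi (a - n) ltac:(lia).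
have Pa (a y : 'I_(n + n)) : permpart f (a, y) = (top_of fi a == top_of fi y).
  by rewrite ffunE (perm_relE f_fi (ltn_ord a) (ltn_ord y)).
apply/forallP => a; have lt_a := top_lt a; apply/andP; split; apply/cards1P.
  have lt_t : top_of fi a < n + n by lia.
  exists (Ordinal lt_t); apply/setP => y; rewrite !inE Pa.
  apply/andP/eqP => [[/eqP a_y lt_y]|->]; first by apply: val_inj; rewrite /= a_y /top_of lt_y.
  by rewrite /= {2}/top_of lt_a.
have [f_lt _ fi_f _] := f_fi (top_of fi a) lt_a.
have lt_b : n + f (top_of fi a) < n + n by lia.
exists (Ordinal lt_b); apply/setP => y; rewrite !inE Pa /=.
apply/andP/eqP => [[/eqP a_y le_y]|->]; last first.
  by rewrite /= leq_addr {2}/top_of ifF ?addKn ?fi_f //; lia.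
have [_ _ _ f_fi_y] := f_fi (y - n) ltac:(have := ltn_ord y; lia).
by apply: val_inj; rewrite /= a_y /top_of ifF ?f_fi_y //; lia.
Qed.

Lemma boxed_boxpart S : boxed (boxpart S).
Proof.
apply/andP; split.
  by apply/forallP => p; apply/implyP; rewrite !ffunE => /eqP->; rewrite linked_refl.
apply/forallP => x; apply/forallP => y; apply/forallP => z; apply/implyP.
rewrite !ffunE /= => /and4P [xz zy lt_y /linkedP xy].
by rewrite !modn_small in xy *; try lia; apply/linkedP => k ?; apply: xy; lia.
Qed.

Lemma preceq_permpart_boxpart f fi S : inv_on f fi ->
  (forall x, x < n -> linked S x (f x)) -> preceq (permpart f) (boxpart S).
Proof.
move=> f_fi S_f; have mod_top (c : 'I_(n + n)) : linked S (c %% n) (top_of fi c).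
  have lt_c := ltn_ord c; rewrite (modn_small2 lt_c) /top_of.
  case: ltnP => ?; first exact: linked_refl.
  have [_ fi_c _ f_fi_c] := f_fi (c - n) ltac:(lia).
  by rewrite -{1}f_fi_c linked_sym; apply: S_f.
apply/forallP => -[a b]; rewrite !ffunE (perm_relE f_fi) //=; apply/implyP => /eqP ab.
by apply: linked_trans (mod_top a) _; rewrite ab linked_sym.
Qed.

Definition zword (w : seq (gen n)) : seq nat := map val (pmap (@zidx n) w).
Definition supp (w : seq (gen n)) : seq nat := map val (map (@gidx n) w).

Lemma zword_cat u v : zword (u ++ v) = zword u ++ zword v.
Proof. by rewrite /zword pmap_cat map_cat. Qed.

Lemma supp_cat u v : supp (u ++ v) = supp u ++ supp v.
Proof. by rewrite /supp !map_cat. Qed.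

Lemma ord_pred_lt (i : 'I_n.-1) : i.+1 < n.
Proof. by rewrite -ltn_predRL. Qed.

Lemma zword_lt w : all (fun i => i.+1 < n) (zword w).
Proof. by apply/allP => _ /mapP [i _ ->]; apply: ord_pred_lt. Qed.

Lemma supp_lt w : all (fun i => i.+1 < n) (supp w).
Proof. by apply/allP => _ /mapP [i _ ->]; apply: ord_pred_lt. Qed.

Lemma zword_sub_supp w : {subset zword w <= supp w}.
Proof.
elim: w => // -[] i w IH k; rewrite /zword /supp /= -/(zword w) -/(supp w) !inE.
  by move/IH ->; rewrite orbT.
by case/orP=> [->|/IH ->]; rewrite ?orbT.
Qed.

Lemma evalE w : eval w = (permpart (act (zword w)), boxpart (supp w)).
Proof.
elim: w => [|g w IH] /=; first by congr pair; [apply: pone_permpart | apply: pone_boxpart].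
have inv_w := inv_on_act (zword_lt w).
rewrite IH /brmul; case: g => i /=.
  by rewrite pone_permpart pb_boxpart (pmul_permpart inv_on_id inv_w) pmul_boxpart.
have inv_i : inv_on (swp i) (swp i).
  by move=> x lt_x; rewrite swpK; have := ord_pred_lt i; have := swpP i x; split; lia.
by rewrite ps_permpart pb_boxpart (pmul_permpart inv_i inv_w) pmul_boxpart.
Qed.

Lemma in_BR_eval (w : seq (gen n)) : in_BR (eval w).
Proof.
have inv_w := inv_on_act (zword_lt w).
rewrite evalE; apply/and5P; split.
- exact: is_setpart_permpart inv_w.
- exact: is_setpart_boxpart.
- exact: is_permpart_permpart inv_w.
- exact: boxed_boxpart.
- by apply: preceq_permpart_boxpart inv_w _ => x _; apply/linked_act/allP/zword_sub_supp.
Qed.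

Lemma brcong_invariants (u v : seq (gen n)) : brcong u v ->
  act (zword u) =1 act (zword v) /\ supp u =i supp v.
Proof.
elim=> {u v} [u v []||||].
- by move=> i; split=> // k; rewrite /supp /= !inE orbb.
- by move=> i j; split=> // k; rewrite /supp /= !inE orbC.
- move=> i j ij; split=> [x|k].
    by rewrite /zword /act /=; case: ij => <-; rewrite swp_braid.
  by rewrite /supp /= !inE; case: (k == val i); case: (k == val j).
- move=> i j ij; split=> [x|k]; last by rewrite /supp /= !inE orbC.
  by rewrite /zword /act /=; case: ij => ij; rewrite (swp_comm _ ij).
- by move=> i j; split=> // k; rewrite /supp /= !inE orbC.
- by move=> i; split=> [x|k]; rewrite /zword /supp /act /= ?swpK // !inE orbb.
- by move=> i; split=> // k; rewrite /supp /= !inE orbb.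
- by [].
- by move=> u v _ [uv1 uv2]; split=> x; rewrite ?uv1 ?uv2.
- by move=> u v w _ [uv1 uv2] _ [vw1 vw2]; split=> x; rewrite ?uv1 ?uv2 ?vw1 ?vw2.
- move=> a b u v _ [uv1 uv2]; split=> x; first by rewrite !zword_cat !act_cat uv1.
  by rewrite !supp_cat !mem_cat uv2.
Qed.

Lemma eq_permpart f g : (forall x, x < n -> f x = g x) -> permpart f = permpart g.
Proof.
move=> fg; apply/ffunP => -[a b]; rewrite !ffunE /perm_rel /=.
by case: (ltnP a n) => ?; case: (ltnP b n) => ? //=; rewrite fg.
Qed.

Lemma eq_boxpart S T : S =i T -> boxpart S = boxpart T.
Proof. by move=> ST; apply/ffunP => p; rewrite !ffunE; apply: linked_eq_mem. Qed.

Lemma eval_brcong (u v : seq (gen n)) : brcong u v -> eval u = eval v.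
Proof.
case/brcong_invariants=> uv1 uv2; rewrite !evalE.
by rewrite (eq_permpart (fun x _ => uv1 x)) (eq_boxpart uv2).
Qed.

Lemma permpart_inj f g : (forall x, x < n -> f x < n) -> permpart f = permpart g ->
  forall x, x < n -> f x = g x.
Proof.
move=> f_lt fg x lt_x; have lt_fx := f_lt x lt_x.
have lt_x2 : x < n + n by lia.
have lt_fx2 : n + f x < n + n by lia.
have := congr1 (fun P : spart n => P (Ordinal lt_x2, Ordinal lt_fx2)) fg.
by rewrite !ffunE /perm_rel /= lt_x ltnNge leq_addr /= addKn eqxx => /esym/eqP.
Qed.

Lemma boxpart_inj S T : boxpart S = boxpart T -> forall k, k.+1 < n -> (k \in S) = (k \in T).
Proof.
move=> ST k lt_k; have lt_k2 : k < n + n by lia.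
have lt_k2' : k.+1 < n + n by lia.
have := congr1 (fun P : spart n => P (Ordinal lt_k2, Ordinal lt_k2')) ST.
by rewrite !ffunE /= !modn_small ?linkedS //; lia.
Qed.

Lemma brcong_eval (u v : seq (gen n)) : eval u = eval v -> brcong u v.
Proof.
rewrite !evalE => -[e_perm e_box].
have uv_act : act (zword u) =1 act (zword v).
  move=> x; case: (ltnP x n) => [lt_x|le_x].
    by apply: permpart_inj e_perm x lt_x => y; apply: act_lt (zword_lt u).
  by rewrite !act_fix //; apply: sub_all (zword_lt _) => k; lia.
have uv_supp : supp u =i supp v.
  move=> k; case: (ltnP k.+1 n) => [|le_k]; first exact: boxpart_inj e_box k.
  have supp_lt w : k \in supp w = false.
    by apply/negbTE/negP => /(allP (supp_lt w)); lia.
  by rewrite !supp_lt.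
apply: c_trans (brcong_normal_form u) _; apply: c_trans _ (c_sym (brcong_normal_form v)).
apply: c_trans (brcong_catr _ (brcong_ges_eq_mem (t := map (@gidx n) v) _)) _.
  by move=> i; rewrite -(mem_map val_inj) -[RHS](mem_map val_inj); apply: uv_supp.
rewrite -!zgens_val; apply: (@brcong_coxeq _ (fun k => k \in supp v)).
- apply: (@coxeq_of_act _ n.-1).
  + apply/allP => k u_k; rewrite -uv_supp zword_sub_supp //=.
    by rewrite ltn_predRL (allP (zword_lt u)).
  + apply/allP => k v_k; rewrite zword_sub_supp //=.
    by rewrite ltn_predRL (allP (zword_lt v)).
  + exact: uv_act.
- by move=> k /(allP (supp_lt v)) lt_k; rewrite inE /= ltn_predRL.
- by [].
Qed.

(** * Every element of BR(S_n) is the value of a word *)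

Lemma preceq_rel_nat P Q c d : preceq P Q -> rel_nat P c d -> rel_nat Q c d.
Proof.
move=> /forallP PQ cd; have /andP [lt_c lt_d] := rel_nat_lt cd.
by move: cd; rewrite !rel_natE; apply: (implyP (PQ (_, _))).
Qed.

Definition links P := [seq k <- iota 0 n.-1 | rel_nat P k k.+1].

Lemma mem_links P k : (k \in links P) = (k.+1 < n) && rel_nat P k k.+1.
Proof. by rewrite mem_filter mem_iota andbC; congr andb; lia. Qed.

Section Boxed.
Variable J : spart n.
Hypotheses (spJ : is_setpart J) (bJ : boxed J).

Lemma boxed_rel_nat_mod c : c < n + n -> rel_nat J c (c %% n).
Proof.
case/andP: bJ => oneJ _ lt_c; have lt_n : 0 < n by lia.
have lt_mod : c %% n < n + n by have := ltn_pmod c lt_n; lia.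
by apply: preceq_rel_nat oneJ _; rewrite rel_natE ffunE /= modn_mod.
Qed.

Lemma boxed_interval c e d : c < e < d -> d < n -> rel_nat J c d -> rel_nat J c e.
Proof.
case/andP: bJ => _ /forallP intJ /andP [lt_ce lt_ed] lt_d.
have [lt_c lt_e lt_d2] : [/\ c < n + n, e < n + n & d < n + n] by split; lia.
rewrite !rel_natE => cd; move: (intJ (Ordinal lt_c)) => /forallP /(_ (Ordinal lt_d2)).
by move=> /forallP /(_ (Ordinal lt_e)) /implyP; apply; rewrite /= lt_ce lt_ed lt_d.
Qed.

Lemma boxed_rel_nat_linked a b : a <= b -> b < n -> rel_nat J a b = linked (links J) a b.
Proof.
have [refl sym trans] := setpart_rel_nat spJ.
move=> le_ab lt_b; apply/idP/linkedP => [ab k lt_k|ab].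
  rewrite mem_links; apply/andP; split; first lia.
  have a_k : rel_nat J a k.
    by case: (a =P k) => [<-|?]; [apply: refl | apply: boxed_interval ab]; lia.
  have a_k1 : rel_nat J a k.+1.
    by case: (k.+1 =P b) => [->//|?]; apply: boxed_interval ab; lia.
  exact: trans (sym _ _ a_k) a_k1.
suff a_x x : a <= x <= b -> rel_nat J a x by apply: a_x; lia.
elim: x => [|x IH] ?; first by rewrite (_ : a = 0); [apply: refl|]; lia.
case: (a =P x.+1) => [<-|?]; first by apply: refl; lia.
apply: trans (IH _) _; first lia.
by have := ab x; rewrite mem_links => /(_ _)/andP [] //; lia.
Qed.

Lemma boxed_eq_boxpart : J = boxpart (links J).
Proof.
have [_ sym trans] := setpart_rel_nat spJ.
apply/ffunP => -[a b]; rewrite ffunE /= -rel_nat_ord.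
have lt_n : 0 < n by have := ltn_ord a; lia.
have amod := boxed_rel_nat_mod (ltn_ord a); have bmod := boxed_rel_nat_mod (ltn_ord b).
have lt_amod := ltn_pmod a lt_n; have lt_bmod := ltn_pmod b lt_n.
have -> : linked (links J) (a %% n) (b %% n) = rel_nat J (a %% n) (b %% n).
  case: (leqP (a %% n) (b %% n)) => ?; first by rewrite boxed_rel_nat_linked.
  by rewrite linked_sym -boxed_rel_nat_linked 1?setpart_symE //; lia.
apply/idP/idP => ab; first exact: trans (sym _ _ amod) (trans _ _ _ ab bmod).
exact: trans amod (trans _ _ _ ab (sym _ _ bmod)).
Qed.

End Boxed.

(* The value 0 is junk: in a permutation partition every point has both partners. *)
Definition partner P c (top : bool) : nat :=
  if [pick y : 'I_(n + n) | rel_nat P c y && ((y < n) == top)] is Some y then val y else 0.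

Lemma partnerP P c top : is_permpart P -> c < n + n ->
  [/\ rel_nat P c (partner P c top), (partner P c top < n) = top &
      forall y, rel_nat P c y -> (y < n) = top -> y = partner P c top].
Proof.
move=> /forallP pP lt_c.
have [y0 y0E] : exists y0 : 'I_(n + n), forall y : 'I_(n + n),
    (rel_nat P c y && ((y < n) == top)) = (y == y0).
  have /andP [one_top one_bot] := pP (Ordinal lt_c).
  case: top; [move/cards1P: one_top | move/cards1P: one_bot] => -[y0 e]; exists y0 => y;
    have := congr1 (fun A : {set 'I_(n + n)} => y \in A) e;
    by rewrite !inE -(rel_nat_ord P (Ordinal lt_c)) ?eqb_id ?eqbF_neg -?leqNgt.
have -> : partner P c top = y0.
  rewrite /partner; case: pickP => [y|none]; first by rewrite y0E => /eqP->.
  by have := none y0; rewrite y0E eqxx.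
have := y0E y0; rewrite eqxx => /andP [c_y0 /eqP y0_top].
split=> // y c_y y_top; have /andP [_ lt_y] := rel_nat_lt c_y.
by have := y0E (Ordinal lt_y); rewrite /= c_y y_top eqxx => /esym/eqP <-.
Qed.

Lemma permpartP P : is_setpart P -> is_permpart P ->
  exists f fi, inv_on f fi /\ P = permpart f.
Proof.
move=> spP pP; have [refl sym trans] := setpart_rel_nat spP.
pose tp c := partner P c true; pose bt c := partner P c false.
have tpP c : c < n + n ->
    [/\ rel_nat P c (tp c), tp c < n & forall y, rel_nat P c y -> y < n -> y = tp c].
  by move=> lt_c; have [? ? uniq] := partnerP true pP lt_c; split=> // y /uniq; apply.
have btP c : c < n + n ->
    [/\ rel_nat P c (bt c), n <= bt c, bt c < n + n &
        forall y, rel_nat P c y -> n <= y -> y = bt c].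
  move=> lt_c; have [c_bt bt_bot uniq] := partnerP false pP lt_c.
  have /andP [_ ?] := rel_nat_lt c_bt; split=> //; first by rewrite leqNgt bt_bot.
  by move=> y /uniq y_bot ?; apply: y_bot; apply/negbTE; rewrite -leqNgt.
have tp_top c : c < n -> tp c = c.
  by move=> lt_c; have [_ _ uniq] := tpP c ltac:(lia); apply/esym/uniq => //; apply: refl; lia.
pose f x := bt x - n; pose fi y := tp (n + y).
have f_fi : inv_on f fi.
  move=> x lt_x; have [x_bt ? ? _] := btP x ltac:(lia); have [x_tp ? _] := tpP (n + x) ltac:(lia).
  split; rewrite /f /fi ?subnKC //; first lia.
    by have [_ _ uniq] := tpP (bt x) ltac:(done); apply/esym/uniq => //; apply: sym.
  have [_ _ _ uniq] := btP (tp (n + x)) ltac:(lia).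
  by rewrite -(uniq (n + x)) ?addKn //; [apply: sym | lia].
exists f, fi; split=> //; apply/ffunP => -[a b]; rewrite ffunE /= -rel_nat_ord.
have tp_top_of c : c < n + n -> top_of fi c = tp c.
  by move=> lt_c; rewrite /top_of /fi; case: ltnP => ?; [rewrite tp_top | rewrite subnKC].
rewrite (perm_relE f_fi (ltn_ord a) (ltn_ord b)) !tp_top_of //.
have [a_tp lt_tpa _] := tpP a (ltn_ord a); have [b_tp _ uniq] := tpP b (ltn_ord b).
apply/idP/eqP => [ab|ab_tp]; first exact: uniq (trans _ _ _ (sym _ _ ab) a_tp) lt_tpa.
by apply: trans a_tp _; rewrite ab_tp; apply: sym.
Qed.

Lemma inv_on_fixed_le f fi m : inv_on f fi -> m < n ->
  (forall x, x < n -> m < x -> f x = x) -> f m <= m.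
Proof.
move=> f_fi lt_m f_fix; rewrite leqNgt; apply/negP => lt_fm.
have [lt_f _ fi_f _] := f_fi m lt_m; have [_ _ fi_ff _] := f_fi (f m) lt_f.
by move: fi_ff; rewrite f_fix // fi_f; lia.
Qed.

Lemma linked_act_word S f fi m : inv_on f fi -> (forall x, x < n -> m <= x -> f x = x) ->
  (forall x, x < n -> linked S x (f x)) ->
  exists u, all (mem S) u /\ forall x, x < n -> act u x = f x.
Proof.
elim: m f fi => [|m IH] f fi f_fi f_fix S_f.
  by exists [::]; split=> // x ? /=; rewrite f_fix.
case: (ltnP m n) => [lt_m|le_m]; last by apply: IH f_fi _ S_f => x ? ?; apply: f_fix; lia.
have le_fm := inv_on_fixed_le f_fi lt_m (fun x lt_x => f_fix x lt_x).
(* [c] carries [m] to [f m] through the block of [m], then induct on [act (rev c) \o f]. *)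
set c := desc m.-1 (m - f m).
have c_lt : all (fun i => i.+1 < n) c by apply: all_map_iota => j ?; lia.
have c_S : all (mem S) c.
  by apply: all_map_iota => j ?; move/linkedP: (S_f m lt_m); apply; lia.
have c_m : act c m = f m by apply: act_desc_le.
pose g x := act (rev c) (f x).
have g_inv : inv_on g (fi \o act c).
  by apply: inv_on_comp f_fi _; rewrite -{2}(revK c); apply: inv_on_act; rewrite all_rev.
have g_fix x : x < n -> m <= x -> g x = x.
  move=> lt_x le_mx; rewrite /g; case: (m =P x) => [<-|?]; first by rewrite -c_m act_revK.
  by rewrite f_fix ?act_fix ?all_rev //; [apply: all_map_iota => j ?|]; lia.
have g_S x : x < n -> linked S x (g x).
  by move=> lt_x; apply: linked_trans (S_f x lt_x) _; apply: linked_act; rewrite all_rev.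
have [u [u_S u_g]] := IH g _ g_inv g_fix g_S.
exists (u ++ c); split; first by rewrite all_cat u_S c_S.
by move=> x lt_x; rewrite act_cat u_g // /g act_Krev.
Qed.

Lemma eval_normal_form (s : seq 'I_n.-1) (u : seq nat) : all (fun k => k < n.-1) u ->
  eval (map (@ge n) s ++ zgens n u) = (permpart (act u), boxpart (map val s ++ u)).
Proof.
have zword_ge t : zword (map (@ge n) t) = [::] by elim: t.
have zword_gz t : zword (map (@gz n) t) = map val t by elim: t => //= i t; rewrite /zword /= => ->.
have supp_ge t : supp (map (@ge n) t) = map val t by elim: t => //= i t; rewrite /supp /= => ->.
have supp_gz t : supp (map (@gz n) t) = map val t by elim: t => //= i t; rewrite /supp /= => ->.
move=> u_lt; rewrite evalE zword_cat supp_cat zword_ge zword_gz supp_ge supp_gz.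
by rewrite map_val_pmap_insub.
Qed.

Lemma eval_surj (x : BR n) : in_BR x -> exists w, eval w = x.
Proof.
case: x => P J /and5P [/= spP spJ pP bJ PJ].
have [f [fi [f_fi eP]]] := permpartP spP pP; subst P; rewrite (boxed_eq_boxpart spJ bJ) in PJ *.
have S_f x : x < n -> linked (links J) x (f x).
  move=> lt_x; have [lt_f _ _ _] := f_fi x lt_x.
  have x_fx : rel_nat (permpart f) x (n + f x).
    by rewrite rel_nat_permpart /perm_rel lt_x (_ : n + f x < n = false) /= ?addKn ?eqxx; lia.
  by move: (preceq_rel_nat PJ x_fx); rewrite rel_nat_boxpart modnDl !modn_small // => /and3P [].
have [u [u_S u_f]] := linked_act_word (m := n) f_fi (fun x lt_x le_x => ltac:(lia)) S_f.
have links_lt k : k \in links J -> k < n.-1 by rewrite mem_links ltn_predRL => /andP [].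
exists (map (@ge n) (pmap insub (links J)) ++ zgens n u).
rewrite eval_normal_form ?map_val_pmap_insub; last first.
- by apply/allP => k /(allP u_S); apply: links_lt.
- by apply/allP => k; apply: links_lt.
congr pair; first exact: eq_permpart.
by apply: eq_boxpart => k; rewrite mem_cat orb_idr // => /(allP u_S).
Qed.

End Partitions.

Theorem theorem5p13 (n : nat) :
  (forall w : seq (gen n), in_BR (eval w)) /\
  (forall x : BR n, in_BR x -> exists w : seq (gen n), eval w = x) /\
  (forall u v : seq (gen n), eval u = eval v <-> brcong u v).
Proof.
split; first exact: in_BR_eval.
split; first exact: eval_surj.
by move=> u v; split; [apply: brcong_eval | apply: eval_brcong].
Qed.
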